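(* Let $T\in\mathcal{T}$ have $2r$ leaves and let $n\ge 2$. Then $\mathrm{gp}(T\boxtimes P_n)=4r=\omega((T\boxtimes P_n)_{\rm SR})$.
   Context: All graphs are finite and simple; $P_n$ is the path on $n$ vertices. The family $\mathcal{T}$ consists of the trees $T$ for which there is a sequence of trees $T_1,\dots,T_r$, $r\ge 1$, such that: $T_1$ is a path on at least three vertices; $T_2$ is obtained from $T_1$ by adding a (disjoint) path $P$ of order at least $3$ and joining by an edge a non-leaf vertex of $P$ with a non-leaf vertex of $T_1$; for each $i\in\{3,\dots,r\}$, $T_i$ is obtained from $T_{i-1}$ by adding a path $P$ of order at least $3$ and joining by an edge a non-leaf vertex of $P$ with a vertex of degree larger than two of $T_{i-1}$; and $T=T_r$. The strong product $G\boxtimes H$ has vertex set $V(G)\times V(H)$, with distinct $(g,h),(g',h')$ adjacent iff ($g=g'$ or $gg'\in E(G)$) and ($h=h'$ or $hh'\in E(H)$). For a connected graph $G$, a set $S\subseteq V(G)$ is a general position set if no three pairwise distinct vertices of $S$ lie on a common geodesic (shortest path); $\mathrm{gp}(G)$ is the maximum cardinality of a general position set. A vertex $u$ is maximally distant from $v$ if every neighbor $w$ of $u$ satisfies $d_G(v,w)\le d_G(u,v)$; $u,v$ are mutually maximally distant (MMD) if each is maximally distant from the other. The strong resolving graph $G_{\rm SR}$ has vertex set $V(G)$, distinct vertices adjacent iff MMD in $G$. $\omega$ is the clique number. *)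

From HB Require Import structures.
From mathcomp Require Import all_boot.
From mathcomp Require Import boolp.
Set Implicit Arguments. Unset Strict Implicit. Unset Printing Implicit Defensive.

Section Graphs.
Variable V : finType.
Variable e : rel V.

Definition simple_graph := symmetric e /\ irreflexive e.

(* distance: least length k of a walk from x to y (#|V| if none exists) *)
Definition walk_of_len (x y : V) (k : nat) : bool :=
  [exists p : k.-tuple V, path e x p && (last x p == y)].

Definition dist (x y : V) : nat := find (walk_of_len x y) (iota 0 #|V|).

Definition geodesic (x : V) (p : seq V) : Prop :=
  path e x p /\ uniq (x :: p) /\ size p = dist x (last x p).

Definition on_common_geodesic (u v w : V) : Prop :=
  exists x p, geodesic x p /\ u \in x :: p /\ v \in x :: p /\ w \in x :: p.

Definition gp_set (S : {set V}) : Prop :=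
  forall u v w, u \in S -> v \in S -> w \in S ->
    u != v -> v != w -> u != w -> ~ on_common_geodesic u v w.

Definition gp : nat := \max_(S : {set V} | `[< gp_set S >]) #|S|.

Definition clique (S : {set V}) : bool :=
  [forall x in S, forall y in S, (x != y) ==> e x y].

Definition omega : nat := \max_(S : {set V} | clique S) #|S|.

Definition max_distant (u v : V) : bool :=
  [forall w, e u w ==> (dist v w <= dist u v)].

Definition MMD (u v : V) : bool := max_distant u v && max_distant v u.

Definition SR_rel : rel V := fun u v => (u != v) && MMD u v.

Definition deg_in (S : {set V}) (x : V) : nat := #|[set y in S | e x y]|.

Definition leaves : {set V} := [set x | deg_in setT x == 1].

Definition induces_path (S : {set V}) : Prop :=
  exists s : seq V, uniq s /\ [set x in s] = S /\
    forall x y, x \in S -> y \in S ->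
      e x y = ((index x s).+1 == index y s) || ((index y s).+1 == index x s).

(* stage i S : the subgraph induced by S is the tree T_i of the construction *)
Inductive stage : nat -> {set V} -> Prop :=
| stage1 S : induces_path S -> 3 <= #|S| -> stage 1 S
| stageS i S P p v : stage i S -> induces_path P -> 3 <= #|P| ->
    [disjoint P & S] ->
    p \in P -> 2 <= deg_in P p ->
    v \in S -> (if i == 1 then 2 <= deg_in S v else 2 < deg_in S v) ->
    (forall x y, x \in P -> y \in S ->
       e x y = (x == p) && (y == v) /\ e y x = (x == p) && (y == v)) ->
    stage i.+1 (S :|: P).

Definition in_family_T : Prop := exists r, 1 <= r /\ stage r [set: V].

End Graphs.

Definition path_rel (n : nat) : rel 'I_n :=
  fun i j => (i.+1 == j :> nat) || (j.+1 == i :> nat).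

Definition strong_prod (A B : finType) (eA : rel A) (eB : rel B) : rel (A * B) :=
  fun x y => (x != y) && ((x.1 == y.1) || eA x.1 y.1) && ((x.2 == y.2) || eB x.2 y.2).

From mathcomp Require Import all_boot.
From mathcomp Require Import boolp.
From mathcomp Require Import zify.
Set Implicit Arguments. Unset Strict Implicit. Unset Printing Implicit Defensive.

(* A function on vertices that vanishes on the diagonal, is 1-Lipschitz along edges and
   strictly decreases along some edge out of every vertex other than the target is the graph
   distance.  This identifies the distance D of every tree of the family, built along its
   construction (a path, then paths attached by a single bridge edge), and the distance
   max (D t s) |i - j| of the strong product of T and P_n.
   The 2 #|leaves| corners (leaf, end of the path) are pairwise mutually maximally distant and
   none lies between two others.  Conversely, a general position set embeds into
   bool * leaves: u is sent to a leaf l such that u lies between l and every w whose distance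
   to u is realised by the tree coordinate (two such w with different first steps from u would
   put u between them), and to the bit telling whether some w whose distance to u is realised
   by the path coordinate lies above u (two of them on both sides of u would again put u in
   between).  A clique of the strong resolving graph embeds into the corners: a vertex
   mutually maximally distant from another cannot step away from it in both coordinates at
   once, which forces a leaf or a path end. *)

Section DistanceFromDescent.
Variables (T : finType) (E : rel T) (d : T -> T -> nat).
Hypothesis d_refl : forall x, d x x = 0.
Hypothesis d_edge : forall x x' y, E x x' -> d x y <= (d x' y).+1.
Hypothesis d_descent : forall x y, x != y -> exists2 x', E x x' & (d x' y).+1 = d x y.

Lemma d_eq0 x y : d x y = 0 -> x = y.
Proof. by move=> dxy0; apply/eqP/negPn/negP => /d_descent [x' _]; rewrite dxy0. Qed.

Lemma d_path_le x p : path E x p -> d x (last x p) <= size p.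
Proof.
elim: p x => [|y p IHp] x /=; first by rewrite d_refl.
by case/andP=> /(d_edge (last y p)) dxy /IHp; lia.
Qed.

Lemma descent_path x y : exists p, [/\ size p = d x y, path E x p & last x p = y].
Proof.
move dxy: (d x y) => m; elim: m x dxy => [|m IHm] x dxy.
  by exists [::]; rewrite (d_eq0 dxy).
have [|x' Exx' dx'y] := @d_descent x y.
  by apply: contra_eq_neq dxy => ->; rewrite d_refl.
have /IHm [p [<- p_path p_last]] : d x' y = m by lia.
by exists (x' :: p); rewrite /= Exx' p_path.
Qed.

Lemma d_triangle x y z : d x z <= d x y + d y z.
Proof.
have [p [<- pxy <-]] := descent_path x y.
have [q [<- qyz <-]] := descent_path (last x p) z.
by rewrite -size_cat -last_cat d_path_le // cat_path pxy.
Qed.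

Lemma d_path_nth z x p a b : path E x p -> a <= b -> b <= size p ->
  d (nth z (x :: p) a) (nth z (x :: p) b) <= b - a.
Proof.
elim: p x a b => [|y p IHp] x [|a] [|b] //=; rewrite ?d_refl // => /andP[Exy yp].
  move=> _ b_le; have := IHp y 0 b yp (leq0n b) b_le.
  by have := d_edge (nth z (y :: p) b) Exy; rewrite /=; lia.
by move=> a_le b_le; rewrite subSS; apply: IHp.
Qed.

Lemma shortest_path_nth z x p a b : path E x p -> d x (last x p) = size p ->
  a <= b -> b <= size p -> d (nth z (x :: p) a) (nth z (x :: p) b) = b - a.
Proof.
move=> xp shortest a_le_b b_le.
have := d_path_nth z xp a_le_b b_le.
have := d_path_nth z xp (leq0n a) (leq_trans a_le_b b_le).
have := d_path_nth z xp b_le (leqnn _).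
rewrite /= -last_nth.
have := d_triangle x (nth z (x :: p) a) (last x p).
have := d_triangle (nth z (x :: p) a) (nth z (x :: p) b) (last x p).
lia.
Qed.

Lemma shortest_path_uniq x p : path E x p -> d x (last x p) = size p -> uniq (x :: p).
Proof.
move=> xp shortest; apply/(uniqP x) => i j; rewrite !inE /= => i_lt j_lt nth_ij.
wlog ij : i j i_lt j_lt nth_ij / i <= j.
  by move=> IH; case: (leqP i j) => [|/ltnW] ?; [|apply/esym]; apply: IH.
have := shortest_path_nth x xp shortest ij (ltnSE j_lt).
by rewrite nth_ij d_refl; lia.
Qed.

Lemma walk_of_lenP x y k :
  reflect (exists p, [/\ size p = k, path E x p & last x p = y]) (walk_of_len E x y k).
Proof.
apply: (iffP existsP) => [[p /andP[xp /eqP p_last]] | [p [p_size xp p_last]]].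
  by exists (val p); rewrite size_tuple.
have p_size' : size p == k by apply/eqP.
by exists (Tuple p_size'); rewrite /= xp p_last eqxx.
Qed.

Lemma dist_eq x y : dist E x y = d x y.
Proof.
have [p [p_size xp p_last]] := descent_path x y.
have d_lt : d x y < #|T|.
  have : uniq (x :: p) by apply: shortest_path_uniq xp _; rewrite p_last p_size.
  by move/card_uniqP => card_p; have := max_card (mem (x :: p)); rewrite card_p /= p_size.
have: walk_of_len E x y (d x y) by apply/walk_of_lenP; exists p.
rewrite /dist; set f := find _ _ => walk_d.
have has_walk : has (walk_of_len E x y) (iota 0 #|T|).
  by apply/hasP; exists (d x y); rewrite ?mem_iota.
have f_le : f <= d x y.
  by rewrite leqNgt; apply/negP => /(before_find 0); rewrite nth_iota // add0n walk_d.
have := nth_find 0 has_walk; rewrite -/f nth_iota ?add0n; last by lia.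
by case/walk_of_lenP => q [q_size xq q_last]; have := d_path_le xq; rewrite q_last; lia.
Qed.

Definition between x y z := d x y + d y z = d x z.

Lemma between_common_geodesic u v w : between u v w -> on_common_geodesic E u v w.
Proof.
move=> uvw.
have [p [p_size up p_last]] := descent_path u v.
have [q [q_size vq q_last]] := descent_path v w.
have upq : path E u (p ++ q) by rewrite cat_path up p_last.
have pq_last : last u (p ++ q) = w by rewrite last_cat p_last.
have pq_size : size (p ++ q) = d u w by rewrite size_cat p_size q_size.
exists u, (p ++ q); split; [split; [|split] | split; [|split]].
- exact: upq.
- by apply: shortest_path_uniq upq _; rewrite pq_last.
- by rewrite pq_last dist_eq.
- exact: mem_head.
- by rewrite -cat_cons mem_cat -p_last mem_last.
- by rewrite -pq_last mem_last.
Qed.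

Hypothesis d_sym : forall x y, d x y = d y x.

Lemma between_sym x y z : between x y z -> between z y x.
Proof. by rewrite /between (d_sym z x) => <-; rewrite addnC (d_sym z y) (d_sym y x). Qed.

Lemma shortest_path_between z x p a b c : path E x p -> d x (last x p) = size p ->
  a <= b -> b <= c -> c <= size p ->
  between (nth z (x :: p) a) (nth z (x :: p) b) (nth z (x :: p) c).
Proof.
move=> xp shortest ab bc c_le; rewrite /between !(shortest_path_nth z xp shortest) //; lia.
Qed.

Lemma common_geodesic_between u v w : on_common_geodesic E u v w ->
  [\/ between u v w, between v u w | between u w v].
Proof.
case=> x [p [[xp [_ p_size]] [u_in [v_in w_in]]]].
rewrite dist_eq in p_size.
have mid := shortest_path_between x xp (esym p_size).
have idx_le y : y \in x :: p -> index y (x :: p) <= size p by rewrite -ltnS -index_mem.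
rewrite -(nth_index x u_in) -(nth_index x v_in) -(nth_index x w_in).
move: (idx_le _ u_in) (idx_le _ v_in) (idx_le _ w_in).
move: (index u _) (index v _) (index w _) => a b c.
wlog ac : a b c / a <= c => [IH a_le b_le c_le|].
  have [|/ltnW ca] := leqP a c; first by move=> ac; exact: IH.
  have := IH c b a ca c_le b_le a_le.
  by case=> /between_sym; [constructor 1 | constructor 3 | constructor 2].
move=> a_le b_le c_le.
have [ba|ab] := leqP b a; first by apply/Or32/(mid b a c).
have [bc|cb] := leqP b c; first by apply/Or31/(mid a b c) => //; apply: ltnW.
by apply/Or33/(mid a c b) => //; apply: ltnW.
Qed.

End DistanceFromDescent.

Definition distn (i j : nat) := (i - j) + (j - i).

Lemma distnn i : distn i i = 0.
Proof. by rewrite /distn subnn. Qed.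

Lemma distnC i j : distn i j = distn j i.
Proof. by rewrite /distn addnC. Qed.

Lemma distn_adjacent i j k : j = i.+1 \/ i = j.+1 ->
  distn j k = (distn i k).+1 \/ distn i k = (distn j k).+1.
Proof. by rewrite /distn; lia. Qed.

Section TreeMetric.
Variables (V : finType) (e : rel V).

(* [D] is the distance of the tree induced by [e] on [S]; the last field, uniqueness of
   the first step towards any target, is what rules out cycles. *)
Record tree_metric (S : {set V}) (D : V -> V -> nat) : Prop := TreeMetric {
  tree_refl x : x \in S -> D x x = 0;
  tree_sym x y : x \in S -> y \in S -> D x y = D y x;
  tree_edge x x' y : x \in S -> x' \in S -> y \in S -> e x x' ->
    D x' y = (D x y).+1 \/ D x y = (D x' y).+1;
  tree_descent x y : x \in S -> y \in S -> x != y ->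
    exists x', [/\ x' \in S, e x x' & (D x' y).+1 = D x y];
  tree_descent_uniq x x1 x2 y : x \in S -> x1 \in S -> x2 \in S -> y \in S ->
    e x x1 -> e x x2 -> (D x1 y).+1 = D x y -> (D x2 y).+1 = D x y -> x1 = x2 }.

Section InducedPath.
Variables (P : {set V}) (s : seq V).
Hypothesis s_P : [set x in s] = P.
Hypothesis s_edge : forall x y, x \in P -> y \in P ->
  e x y = ((index x s).+1 == index y s) || ((index y s).+1 == index x s).

Lemma mem_path_set x : (x \in P) = (x \in s).
Proof. by rewrite -s_P inE. Qed.

Lemma index_path_lt x : x \in P -> index x s < size s.
Proof. by rewrite index_mem -mem_path_set. Qed.

Lemma index_path_inj : {in P &, injective (index^~ s)}.
Proof.
move=> x y; rewrite !mem_path_set => x_in y_in idx_xy.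
by rewrite -(nth_index x x_in) idx_xy nth_index.
Qed.

Lemma path_edge_index x y : x \in P -> y \in P -> e x y ->
  index y s = (index x s).+1 \/ index x s = (index y s).+1.
Proof. by move=> x_in y_in; rewrite s_edge // => /orP[] /eqP; [left | right]. Qed.

Lemma path_descent x k : uniq s -> x \in P -> k < size s -> index x s != k ->
  exists x', [/\ x' \in P, e x x' & (distn (index x' s) k).+1 = distn (index x s) k].
Proof.
move=> s_uniq x_in k_lt x_neq_k; have x_lt := index_path_lt x_in.
pose j := if index x s < k then (index x s).+1 else (index x s).-1.
have j_lt : j < size s by rewrite /j; case: ifP; lia.
have y_in : nth x s j \in P by rewrite mem_path_set mem_nth.
exists (nth x s j); rewrite s_edge // index_uniq //.
by split => //; rewrite /j /distn; case: ifP; lia.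
Qed.

Lemma path_descent_uniq x x1 x2 k : x \in P -> x1 \in P -> x2 \in P -> e x x1 -> e x x2 ->
  (distn (index x1 s) k).+1 = distn (index x s) k ->
  (distn (index x2 s) k).+1 = distn (index x s) k -> x1 = x2.
Proof.
move=> x_in x1_in x2_in /(path_edge_index x_in x1_in) ? /(path_edge_index x_in x2_in) ?.
by rewrite /distn => ? ?; apply: index_path_inj => //; lia.
Qed.

Lemma path_tree_metric : uniq s -> tree_metric P (fun x y => distn (index x s) (index y s)).
Proof.
move=> s_uniq; split=> [x _ | x y _ _ | x x' y x_in x'_in _ /(path_edge_index x_in x'_in) |
         x y x_in y_in x_neq_y | x x1 x2 y x_in x1_in x2_in _].
- exact: distnn.
- exact: distnC.
- exact: distn_adjacent.
- have x_idx : index x s != index y s := contra_neq (index_path_inj x_in y_in) x_neq_y.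
  exact: path_descent s_uniq x_in (index_path_lt y_in) x_idx.
- exact: path_descent_uniq.
Qed.

End InducedPath.

Lemma induced_path_tree_metric S : induces_path e S -> exists D, tree_metric S D.
Proof. by case=> s [s_uniq [s_S s_edge]]; eexists; apply: path_tree_metric s_S s_edge s_uniq. Qed.

Section AttachPath.
Variables (S P : {set V}) (s : seq V) (p v : V) (D : V -> V -> nat).
Hypothesis D_tree : tree_metric S D.
Hypotheses (s_uniq : uniq s) (s_P : [set x in s] = P).
Hypothesis s_edge : forall x y, x \in P -> y \in P ->
  e x y = ((index x s).+1 == index y s) || ((index y s).+1 == index x s).
Hypotheses (PS_disj : [disjoint P & S]) (p_in : p \in P) (v_in : v \in S).
Hypothesis cross_edge : forall x y, x \in P -> y \in S ->
  e x y = (x == p) && (y == v) /\ e y x = (x == p) && (y == v).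

Definition attach_dist x y :=
  if x \in S then
    if y \in S then D x y else (D x v + distn (index p s) (index y s)).+1
  else
    if y \in S then (distn (index x s) (index p s) + D v y).+1
    else distn (index x s) (index y s).

Variant attach_mem_spec x : bool -> Prop :=
  | AttachS of x \in S : attach_mem_spec x true
  | AttachP of x \in P : attach_mem_spec x false.

Lemma attach_memP x : x \in S :|: P -> attach_mem_spec x (x \in S).
Proof.
case/setUP=> [x_S | x_P]; first by rewrite x_S; constructor.
by rewrite (disjointFr PS_disj x_P); constructor.
Qed.

Lemma cross_edge_SP x y : x \in S -> y \in P -> e x y -> x = v /\ y = p.
Proof. by move=> x_S y_P; rewrite (cross_edge y_P x_S).2 => /andP[/eqP -> /eqP ->]. Qed.

Lemma cross_edge_PS x y : x \in P -> y \in S -> e x y -> x = p /\ y = v.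
Proof. by move=> x_P y_S; rewrite (cross_edge x_P y_S).1 => /andP[/eqP -> /eqP ->]. Qed.

Lemma attach_refl x : x \in S :|: P -> attach_dist x x = 0.
Proof.
rewrite /attach_dist => /attach_memP [x_S | _] /=; first exact: (tree_refl D_tree x_S).
exact: distnn.
Qed.

Lemma attach_sym x y : x \in S :|: P -> y \in S :|: P -> attach_dist x y = attach_dist y x.
Proof.
rewrite /attach_dist => /attach_memP [x_S | _] /attach_memP [y_S | _] /=.
- exact: (tree_sym D_tree x_S y_S).
- by rewrite (tree_sym D_tree x_S v_in) distnC addnC.
- by rewrite (tree_sym D_tree v_in y_S) distnC addnC.
- exact: distnC.
Qed.

Lemma attach_edge x x' y : x \in S :|: P -> x' \in S :|: P -> y \in S :|: P -> e x x' ->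
  attach_dist x' y = (attach_dist x y).+1 \/ attach_dist x y = (attach_dist x' y).+1.
Proof.
rewrite /attach_dist => x_in x'_in y_in.
case: (attach_memP x_in) => x_S; case: (attach_memP x'_in) => x'_S exx' /=.
- case: (attach_memP y_in) => y_S /=; first exact: (tree_edge D_tree x_S x'_S y_S exx').
  by case: (tree_edge D_tree x_S x'_S v_in exx') => ->; [left | right].
- case: (cross_edge_SP x_S x'_S exx') => -> ->.
  case: (attach_memP y_in) => _ /=; first by left; rewrite distnn.
  by right; rewrite (tree_refl D_tree v_in).
- case: (cross_edge_PS x_S x'_S exx') => -> ->.
  case: (attach_memP y_in) => _ /=; first by right; rewrite distnn.
  by left; rewrite (tree_refl D_tree v_in).
- have := path_edge_index s_edge x_S x'_S exx'.
  case: (attach_memP y_in) => _ /=; last exact: distn_adjacent.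
  by case/(distn_adjacent (index p s)) => ->; rewrite addSn; [left | right].
Qed.

Lemma attach_bridge : e v p /\ e p v.
Proof. by rewrite (cross_edge p_in v_in).1 (cross_edge p_in v_in).2 !eqxx. Qed.

Lemma attach_descent x y : x \in S :|: P -> y \in S :|: P -> x != y ->
  exists x', [/\ x' \in S :|: P, e x x' & (attach_dist x' y).+1 = attach_dist x y].
Proof.
rewrite /attach_dist => x_in y_in x_neq_y; have [e_vp e_pv] := attach_bridge.
have p_notS : p \in S = false by apply: disjointFr PS_disj p_in.
have p_idx : index p s < size s := index_path_lt s_P p_in.
case: (attach_memP x_in) => x_S; case: (attach_memP y_in) => y_S /=.
- have [x' [x'_S exx' <-]] := tree_descent D_tree x_S y_S x_neq_y.
  by exists x'; rewrite in_setU x'_S.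
- have [-> | x_neq_v] := eqVneq x v.
    by exists p; rewrite in_setU p_in orbT p_notS (tree_refl D_tree v_in).
  have [x' [x'_S exx' <-]] := tree_descent D_tree x_S v_in x_neq_v.
  by exists x'; rewrite in_setU x'_S.
- have [-> | x_neq_p] := eqVneq x p.
    by exists v; rewrite in_setU v_in distnn.
  have x_idx : index x s != index p s := contra_neq (index_path_inj s_P x_S p_in) x_neq_p.
  have [x' [x'_P exx' <-]] := path_descent s_P s_edge s_uniq x_S p_idx x_idx.
  by exists x'; rewrite in_setU x'_P orbT (disjointFr PS_disj x'_P).
- have x_idx : index x s != index y s := contra_neq (index_path_inj s_P x_S y_S) x_neq_y.
  have [x' [x'_P exx' <-]] :=
    path_descent s_P s_edge s_uniq x_S (index_path_lt s_P y_S) x_idx.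
  by exists x'; rewrite in_setU x'_P orbT (disjointFr PS_disj x'_P).
Qed.

Lemma attach_descent_uniq_S x x1 x2 y :
  x \in S -> x1 \in S -> x2 \in S :|: P -> y \in S :|: P -> e x x1 -> e x x2 ->
  (attach_dist x1 y).+1 = attach_dist x y -> (attach_dist x2 y).+1 = attach_dist x y ->
  x1 = x2.
Proof.
rewrite /attach_dist => x_S x1_S x2_in y_in exx1 exx2; rewrite x_S x1_S.
case: (attach_memP x2_in) => x2_S.
  case: (attach_memP y_in) => y_S /=.
    exact: (tree_descent_uniq D_tree x_S x1_S x2_S y_S).
  rewrite -!addSn => -[] /addIn d1 [] /addIn d2.
  exact: (tree_descent_uniq D_tree x_S x1_S x2_S v_in exx1 exx2).
case: (cross_edge_SP x_S x2_S exx2) => -> ->.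
(* Boolean facts left in the context make [lia] case split exponentially. *)
by case: (attach_memP y_in) => _ /=; rewrite ?distnn ?(tree_refl D_tree v_in); clear; lia.
Qed.

Lemma attach_descent_uniq_P x x1 x2 y :
  x \in P -> x1 \in P -> x2 \in S :|: P -> y \in S :|: P -> e x x1 -> e x x2 ->
  (attach_dist x1 y).+1 = attach_dist x y -> (attach_dist x2 y).+1 = attach_dist x y ->
  x1 = x2.
Proof.
rewrite /attach_dist => x_P x1_P x2_in y_in exx1 exx2.
rewrite (disjointFr PS_disj x_P) (disjointFr PS_disj x1_P).
case: (attach_memP x2_in) => x2_S.
  case: (cross_edge_PS x_P x2_S exx2) => -> ->.
  by case: (attach_memP y_in) => _ /=; rewrite ?distnn ?(tree_refl D_tree v_in); clear; lia.
case: (attach_memP y_in) => y_S /=; last first.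
  exact: (path_descent_uniq s_P s_edge x_P x1_P x2_S exx1 exx2).
rewrite -!addSn => -[] /addIn d1 [] /addIn d2.
exact: (path_descent_uniq s_P s_edge x_P x1_P x2_S exx1 exx2 d1 d2).
Qed.

Lemma attach_descent_uniq x x1 x2 y :
  x \in S :|: P -> x1 \in S :|: P -> x2 \in S :|: P -> y \in S :|: P -> e x x1 -> e x x2 ->
  (attach_dist x1 y).+1 = attach_dist x y -> (attach_dist x2 y).+1 = attach_dist x y ->
  x1 = x2.
Proof.
move=> x_in x1_in x2_in y_in exx1 exx2 d1 d2.
case/setUP: x_in => [x_S | x_P].
  case/setUP: (x1_in) => [x1_S | x1_P].
    exact: (attach_descent_uniq_S x_S x1_S x2_in y_in exx1 exx2 d1 d2).
  case/setUP: (x2_in) => [x2_S | x2_P].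
    exact: esym (attach_descent_uniq_S x_S x2_S x1_in y_in exx2 exx1 d2 d1).
  by rewrite (cross_edge_SP x_S x1_P exx1).2 (cross_edge_SP x_S x2_P exx2).2.
case/setUP: (x1_in) => [x1_S | x1_P]; last first.
  exact: (attach_descent_uniq_P x_P x1_P x2_in y_in exx1 exx2 d1 d2).
case/setUP: (x2_in) => [x2_S | x2_P]; last first.
  exact: esym (attach_descent_uniq_P x_P x2_P x1_in y_in exx2 exx1 d2 d1).
by rewrite (cross_edge_PS x_P x1_S exx1).2 (cross_edge_PS x_P x2_S exx2).2.
Qed.

Lemma attach_tree_metric : tree_metric (S :|: P) attach_dist.
Proof.
split; [exact: attach_refl | exact: attach_sym | exact: attach_edge |
        exact: attach_descent | exact: attach_descent_uniq].
Qed.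

End AttachPath.

Lemma stage_tree_metric i S : stage e i S -> exists D, tree_metric S D.
Proof.
elim=> [S0 S0_path _ | {}i {}S P p v _ [D D_tree] [s [s_uniq [s_P s_edge]]] _ PS_disj p_in _
         v_in _ cross]; first exact: induced_path_tree_metric.
by eexists; apply: attach_tree_metric D_tree s_uniq s_P s_edge PS_disj p_in v_in cross.
Qed.

Lemma stage_card i S : stage e i S -> 2 < #|S|.
Proof.
elim=> // {}i {}S P p v _ S_gt2 *.
by apply: leq_trans S_gt2 _; apply/subset_leq_card/subsetUl.
Qed.

End TreeMetric.

Section Tree.
Variables (V : finType) (e : rel V) (D : V -> V -> nat).
Hypothesis e_sym : symmetric e.
Hypothesis D_tree : tree_metric e [set: V] D.

Lemma tree_reflT x : D x x = 0.
Proof. exact: (tree_refl D_tree (in_setT x)). Qed.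

Lemma tree_symT x y : D x y = D y x.
Proof. exact: (tree_sym D_tree (in_setT x) (in_setT y)). Qed.

Lemma tree_edgeT x x' y : e x x' -> D x' y = (D x y).+1 \/ D x y = (D x' y).+1.
Proof. exact: (tree_edge D_tree (in_setT x) (in_setT x') (in_setT y)). Qed.

Lemma tree_descentT x y : x != y -> exists2 x', e x x' & (D x' y).+1 = D x y.
Proof.
by case/(tree_descent D_tree (in_setT x) (in_setT y)) => x' [_ exx' dx']; exists x'.
Qed.

Lemma tree_descent_uniqT x x1 x2 y : e x x1 -> e x x2 ->
  (D x1 y).+1 = D x y -> (D x2 y).+1 = D x y -> x1 = x2.
Proof. exact: (tree_descent_uniq D_tree (in_setT x) (in_setT x1) (in_setT x2) (in_setT y)). Qed.

Lemma tree_lipschitz x x' y : e x x' -> D x y <= (D x' y).+1.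
Proof. by move/(tree_edgeT y); lia. Qed.

Lemma tree_triangle x y z : D x z <= D x y + D y z.
Proof. exact: (d_triangle tree_reflT tree_lipschitz tree_descentT). Qed.

Lemma tree_eq0 x y : D x y = 0 -> x = y.
Proof. exact: (d_eq0 tree_descentT). Qed.

Lemma tree_step_away t x1 x2 y : e t x1 -> e t x2 -> x1 != x2 ->
  (D x2 y).+1 = D t y -> D x1 y = (D t y).+1.
Proof.
move=> etx1 etx2 x12 d2; case: (tree_edgeT y etx1) => // d1.
by case/eqP: x12; apply: (tree_descent_uniqT etx1 etx2 (esym d1) d2).
Qed.

Lemma tree_branch t s1 s2 x1 x2 : e t x1 -> e t x2 -> x1 != x2 ->
  (D x1 s1).+1 = D t s1 -> (D x2 s2).+1 = D t s2 -> D s1 s2 = D s1 t + D t s2.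
Proof.
move dts1: (D t s1) => m; elim: m t x1 x2 dts1 => // m IHm t x1 x2 dts1 etx1 etx2 x12 [dx1s1].
move=> d2; have dx1s2 := tree_step_away etx1 etx2 x12 d2.
have [x1_s1 | x1_neq_s1] := eqVneq x1 s1.
  by subst s1; rewrite dx1s2 (tree_symT x1 t) dts1 -dx1s1 tree_reflT.
have [z ex1z dz] := tree_descentT x1_neq_s1.
have z_neq_t : z != t by apply: contra_eq_neq dz => ->; rewrite dts1 dx1s1; lia.
rewrite (IHm x1 z t dx1s1 ex1z _ z_neq_t (etrans dz dx1s1) (esym dx1s2)) ?(e_sym x1) //.
by rewrite (tree_symT s1 x1) dx1s1 (tree_symT s1 t) dts1 dx1s2 addnS.
Qed.

Lemma tree_move_toward t s : exists2 t', (t == t') || e t t' & D t' s = (D t s).-1.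
Proof.
have [<- | ts] := eqVneq t s; first by exists t; rewrite ?eqxx ?tree_reflT.
by have [t' ett' <-] := tree_descentT ts; exists t'; rewrite ?ett' ?orbT.
Qed.

Lemma tree_gt0 x y : x != y -> 0 < D x y.
Proof. by rewrite lt0n; apply: contra_neq => /tree_eq0. Qed.

Lemma leafP l : reflect (exists y, e l =1 pred1 y) (l \in leaves e).
Proof.
rewrite inE /deg_in; apply: (iffP cards1P) => -[y Nl]; exists y.
  by move=> z; move/setP/(_ z): Nl; rewrite !inE.
by apply/setP => z; rewrite !inE Nl.
Qed.

Lemma leaf_step_toward l y s : l \in leaves e -> l != s -> e l y -> (D y s).+1 = D l s.
Proof.
case/leafP=> z Nl /tree_descentT [y' ely' dy'] ely.
by move: ely ely'; rewrite !Nl => /eqP -> /eqP <-.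
Qed.

Lemma leaf_strict l1 l2 l3 : l2 \in leaves e -> l2 != l1 -> l2 != l3 ->
  (D l1 l3).+2 <= D l1 l2 + D l2 l3.
Proof.
move=> l2_leaf l21 l23; have [y el2y dy] := tree_descentT l21.
have := leaf_step_toward l2_leaf l23 el2y; have := tree_triangle l1 y l3.
by rewrite (tree_symT l1 y) (tree_symT l1 l2); lia.
Qed.

Lemma nonleaf_other_neighbor x y : x \notin leaves e -> e x y ->
  exists2 y', e x y' & y' != y.
Proof.
move=> x_nleaf exy.
have [/existsP [y' /andP [exy' y'y]] | /existsPn other] := boolP [exists y', e x y' && (y' != y)].
  by exists y'.
case/negP: x_nleaf; apply/leafP; exists y => z /=.
by apply/idP/eqP => [exz | -> //]; apply/eqP; move: (other z); rewrite exz negbK.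
Qed.

Lemma leaf_behind_edge t x : e t x -> exists2 l, l \in leaves e & (D x l).+1 = D t l.
Proof.
move=> etx; pose behind z := (D x z).+1 == D t z.
have dtx : D t x = 1 by case: (tree_edgeT x etx); rewrite tree_reflT; lia.
have x_behind : behind x by rewrite /behind tree_reflT dtx.
case: (arg_maxnP (D t) x_behind) => l /eqP l_behind l_max.
exists l => //; apply/leafP.
have l_neq_t : l != t by apply: contra_eq_neq l_behind => ->; rewrite tree_reflT.
have [y0 ely0 dy0] := tree_descentT l_neq_t.
exists y0 => y /=; apply/idP/eqP => [ely | -> //].
case: (tree_edgeT t ely) => [dyt | dlt]; last first.
  exact: (tree_descent_uniqT ely ely0 (esym dlt) dy0).
have y_behind : behind y.
  have eyl : e y l by rewrite e_sym.
  have := tree_lipschitz x eyl; have := tree_triangle t x y; move: dyt.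
  by rewrite /behind (tree_symT y t) (tree_symT l t) (tree_symT y x) (tree_symT l x) dtx; lia.
by have := l_max y y_behind; rewrite (tree_symT t y) dyt (tree_symT t l); lia.
Qed.

Hypothesis V_gt1 : 1 < #|V|.

Lemma exists_neighbor x : exists x', e x x'.
Proof.
have [y x_neq_y] : exists y, x != y.
  move/card_gt1P: V_gt1 => [a [b [_ _ ab]]].
  by have [-> | xa] := eqVneq x a; [exists b | exists a].
by have [x' exx' _] := tree_descentT x_neq_y; exists x'.
Qed.

Lemma leaf_exists : exists l, l \in leaves e.
Proof.
have [x _] := card_gt0P (ltnW V_gt1); have [y exy] := exists_neighbor x.
by have [l l_leaf _] := leaf_behind_edge exy; exists l.
Qed.

Lemma exists_step_away t s : t \notin leaves e \/ t = s ->
  exists2 t', e t t' & D t' s = (D t s).+1.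
Proof.
have [<- _ | ts] := eqVneq t s.
  have [x etx] := exists_neighbor t; exists x => //.
  by case: (tree_edgeT t etx); rewrite tree_reflT; lia.
case=> [t_nleaf | t_s]; last by rewrite t_s eqxx in ts.
have [x0 etx0 dx0] := tree_descentT ts; have [x1 etx1 x10] := nonleaf_other_neighbor t_nleaf etx0.
by exists x1; last exact: (tree_step_away etx1 etx0 x10 dx0).
Qed.

End Tree.

Section StrongProduct.
Variables (V : finType) (e : rel V) (D : V -> V -> nat) (n : nat).
Hypothesis D_tree : tree_metric e [set: V] D.
Hypothesis n_gt1 : 1 < n.

Local Notation E := (strong_prod e (@path_rel n)).

Lemma path_relE (i j : 'I_n) : path_rel i j = (distn i j == 1).
Proof. by rewrite /path_rel /distn; lia. Qed.

Lemma path_move_toward (i j : 'I_n) :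
  exists2 i' : 'I_n, (i == i') || path_rel i i' & distn i' j = (distn i j).-1.
Proof.
have [ij | ij | <-] := ltngtP i j; last by exists i; rewrite ?eqxx ?distnn.
  have i1_lt : i.+1 < n by have := ltn_ord j; lia.
  by exists (Ordinal i1_lt); rewrite ?path_relE ?orbT /distn /=; lia.
have i'_lt : i.-1 < n by have := ltn_ord i; lia.
by exists (Ordinal i'_lt); rewrite ?path_relE ?orbT /distn /=; lia.
Qed.

Lemma strong_prod_edge t t' (i i' : 'I_n) :
  (t == t') || e t t' -> (i == i') || path_rel i i' -> (t, i) != (t', i') -> E (t, i) (t', i').
Proof. by rewrite /strong_prod /= => -> ->; rewrite !andbT. Qed.

Definition prod_dist (u w : V * 'I_n) := maxn (D u.1 w.1) (distn u.2 w.2).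

Lemma prod_dist_refl u : prod_dist u u = 0.
Proof. by rewrite /prod_dist (tree_reflT D_tree) distnn. Qed.

Lemma prod_dist_sym u w : prod_dist u w = prod_dist w u.
Proof. by rewrite /prod_dist (tree_symT D_tree u.1) distnC. Qed.

Lemma prod_dist_lipschitz u u' w : E u u' -> prod_dist u w <= (prod_dist u' w).+1.
Proof.
case: u u' w => [t i] [t' i'] [s j]; rewrite /strong_prod /prod_dist /= => /andP[/andP[_ tt'] ii'].
have Dt : D t s <= (D t' s).+1.
  by case/orP: tt' => [/eqP -> | /(tree_lipschitz D_tree s) //]; lia.
have di : distn i j <= (distn i' j).+1.
  by case/orP: ii' => [/eqP -> | ]; rewrite ?path_relE /distn; lia.
lia.
Qed.

Lemma prod_dist_gt0 u w : u != w -> 0 < prod_dist u w.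
Proof.
case: u w => [t i] [s j] uw; rewrite /prod_dist /=.
have [ts | /(tree_gt0 D_tree)] := eqVneq t s; last by lia.
have ij : (i : nat) != j by apply: contra_neq uw => /val_inj ->; rewrite ts.
by move: ij; rewrite /distn; lia.
Qed.

Lemma prod_dist_descent u w : u != w -> exists2 u', E u u' & (prod_dist u' w).+1 = prod_dist u w.
Proof.
case: u w => [t i] [s j] uw.
have [t' tt' dt'] := tree_move_toward D_tree t s.
have [i' ii' di'] := path_move_toward i j.
have dist_pos := prod_dist_gt0 uw.
exists (t', i'); last by move: dist_pos; rewrite /prod_dist /= dt' di'; lia.
apply: strong_prod_edge => //; apply: contraTneq dist_pos => -[t_t' i_i'].
by move: dt' di'; rewrite -t_t' -i_i' /prod_dist /=; lia.
Qed.

Lemma dist_prod u w : dist E u w = prod_dist u w.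
Proof. exact: (dist_eq prod_dist_refl prod_dist_lipschitz prod_dist_descent). Qed.

Definition path_end (i : 'I_n) := (i == 0 :> nat) || (i == n.-1 :> nat).

Definition corners := [set u : V * 'I_n | (u.1 \in leaves e) && path_end u.2].

Lemma in_corners t i : ((t, i) \in corners) = (t \in leaves e) && path_end i.
Proof. exact: in_set. Qed.

Lemma card_corners : #|corners| = 2 * #|leaves e|.
Proof.
have n_gt0 : 0 < n by lia.
have n1_lt : n.-1 < n by lia.
have -> : corners = setX (leaves e) [set Ordinal n_gt0; Ordinal n1_lt].
  by apply/setP => -[t i]; rewrite !inE /path_end -!val_eqE.
rewrite cardsX cards2 -val_eqE /=.
have -> : (0 != n.-1) = true by lia.
by rewrite mulnC.
Qed.

Lemma distn_ends (i j : 'I_n) : path_end i -> path_end j -> i != j -> distn i j = n.-1.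
Proof.
move=> + + ij; have : (i : nat) != j := ij.
by rewrite /path_end /distn; have := ltn_ord i; have := ltn_ord j; lia.
Qed.

Lemma distn_ord_le (i j : 'I_n) : distn i j <= n.-1.
Proof. by rewrite /distn; have := ltn_ord i; have := ltn_ord j; lia. Qed.

Lemma end_pair_not_between l (i i' : 'I_n) w : path_end i -> path_end i' -> i != i' ->
  (l, i') != w -> ~ between prod_dist (l, i) (l, i') w.
Proof.
move=> i_end i'_end ii' /prod_dist_gt0 dvw; rewrite /between.
have -> : prod_dist (l, i) (l, i') = n.-1.
  by rewrite /prod_dist /= (tree_reflT D_tree) distn_ends // max0n.
by move: dvw (distn_ord_le i w.2); rewrite /prod_dist /=; lia.
Qed.

Lemma corners_not_between u v w : u \in corners -> v \in corners -> w \in corners ->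
  u != v -> v != w -> ~ between prod_dist u v w.
Proof.
case: u v w => [l1 i1] [l2 i2] [l3 i3]; rewrite !in_corners.
move=> /andP[_ i1_end] /andP[l2_leaf i2_end] /andP[_ i3_end] uv vw.
have [l21 | l21] := eqVneq l2 l1.
  subst l2; apply: end_pair_not_between vw => //.
  by apply: contra_neq uv => ->.
have [l23 | l23] := eqVneq l2 l3.
  subst l3; move/(between_sym prod_dist_sym); apply: end_pair_not_between => //.
    by apply: contra_neq vw => ->.
  by rewrite eq_sym.
have := leaf_strict D_tree l2_leaf l21 l23.
have := tree_gt0 D_tree l21; have := tree_gt0 D_tree l23.
move: i1_end i2_end i3_end; rewrite /between /prod_dist /path_end /distn /=.
by rewrite (tree_symT D_tree l2 l1); clear; lia.
Qed.

Lemma corners_gp : gp_set E corners.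
Proof.
move=> u v w u_in v_in w_in uv vw uw.
case/(common_geodesic_between prod_dist_refl prod_dist_lipschitz prod_dist_descent prod_dist_sym).
- exact: corners_not_between.
- by apply: corners_not_between; rewrite // eq_sym.
- by apply: corners_not_between; rewrite // eq_sym.
Qed.

Lemma corner_max_distant u v : u \in corners -> v \in corners -> u != v -> max_distant E u v.
Proof.
case: u v => [l i] [l' j]; rewrite !in_corners => /andP[l_leaf i_end] /andP[_ j_end] uv.
apply/forallP => -[t' i']; apply/implyP; rewrite !dist_prod /prod_dist /strong_prod /=.
move=> /andP[/andP[_ lt'] ii'].
have {ii'} : ((i : nat) == i') || (distn i i' == 1) by rewrite -path_relE.
have [ll' | ll'] := eqVneq l l'.
  subst l'; have ij : i != j by apply: contra_neq uv => ->.
  have Dlt : D l t' <= 1.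
    case/orP: lt' => [/eqP <- | /(tree_edgeT D_tree l)]; rewrite (tree_reflT D_tree) //.
    by rewrite (tree_symT D_tree t'); lia.
  rewrite (tree_reflT D_tree) (distn_ends i_end j_end ij).
  by move: (distn_ord_le j i') Dlt; lia.
have Dlt : D l' t' <= D l l'.
  case/orP: lt' => [/eqP <- | elt']; first by rewrite (tree_symT D_tree).
  by rewrite (tree_symT D_tree l') -(leaf_step_toward D_tree l_leaf ll' elt') (tree_symT D_tree t').
have := tree_gt0 D_tree ll'; move: Dlt (distn_ord_le j i') i_end j_end.
rewrite /path_end /distn; have := ltn_ord i; have := ltn_ord j; have := ltn_ord i'.
clear; lia.
Qed.

Lemma corners_clique : clique (SR_rel E) corners.
Proof.
apply/forall_inP => u u_in; apply/forall_inP => v v_in; apply/implyP => uv.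
by rewrite /SR_rel uv /MMD !corner_max_distant // eq_sym.
Qed.

Definition tree_dominant (u w : V * 'I_n) := distn u.2 w.2 <= D u.1 w.1.

Lemma tree_dominant_sym u w : tree_dominant u w = tree_dominant w u.
Proof. by rewrite /tree_dominant distnC (tree_symT D_tree). Qed.

Lemma tree_dominant_neq u w : w != u -> tree_dominant u w -> u.1 != w.1.
Proof.
case: u w => [t i] [s j] wu; rewrite /tree_dominant /=; apply: contraTneq => ts.
have ij : (j : nat) != i by apply: contra_neq wu => /val_inj ->; rewrite ts.
by move: ij; rewrite ts (tree_reflT D_tree) /distn; lia.
Qed.

Hypotheses (e_sym : symmetric e) (V_gt1 : 1 < #|V|).

Section GeneralPositionBound.
Variable S : {set V * 'I_n}.
Hypothesis S_gp : gp_set E S.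

Lemma gp_not_between u v w : u \in S -> v \in S -> w \in S ->
  u != v -> v != w -> u != w -> ~ between prod_dist u v w.
Proof.
move=> u_in v_in w_in uv vw uw uvw; apply: (S_gp u_in v_in w_in uv vw uw).
exact: (between_common_geodesic prod_dist_refl prod_dist_lipschitz prod_dist_descent uvw).
Qed.

Lemma path_dominant_opposite u w1 w2 : u \in S -> w1 \in S -> w2 \in S ->
  w1 != u -> w2 != u -> ~~ tree_dominant u w1 -> ~~ tree_dominant u w2 ->
  w1.2 < u.2 < w2.2 -> False.
Proof.
move=> u_in w1_in w2_in w1u w2u; rewrite /tree_dominant -!ltnNge => dom1 dom2 /andP[lt1 lt2].
have w12 : w1 != w2 by apply: contraTneq lt1 => ->; rewrite -leqNgt ltnW.
apply: (gp_not_between w1_in u_in w2_in) => //; first by rewrite eq_sym.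
(* Projections of pairs may carry different type annotations, which [lia] would read as
   different atoms: destructure first. *)
move: u w1 w2 {u_in w1_in w2_in w1u w2u w12} dom1 dom2 lt1 lt2 => [t i] [s1 j1] [s2 j2] /=.
have := tree_triangle D_tree s1 t s2.
by rewrite /between /prod_dist /= (tree_symT D_tree s1 t) /distn; lia.
Qed.

Lemma tree_dominant_first_step u w1 w2 x1 x2 : u \in S -> w1 \in S -> w2 \in S ->
  w1 != u -> w2 != u -> tree_dominant u w1 -> tree_dominant u w2 ->
  e u.1 x1 -> (D x1 w1.1).+1 = D u.1 w1.1 -> e u.1 x2 -> (D x2 w2.1).+1 = D u.1 w2.1 ->
  x1 = x2.
Proof.
move=> u_in w1_in w2_in w1u w2u dom1 dom2 ex1 d1 ex2 d2; apply/eqP/negPn/negP => x12.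
have branch := tree_branch e_sym D_tree ex1 ex2 x12 d1 d2.
have u1w1 := tree_gt0 D_tree (tree_dominant_neq w1u dom1).
have w12 : w1 != w2.
  apply: contraTneq u1w1 => w12; move: branch.
  rewrite -w12 (tree_reflT D_tree) (tree_symT D_tree w1.1 u.1) => /esym/eqP.
  by rewrite addn_eq0 andbb => /eqP ->.
apply: (gp_not_between w1_in u_in w2_in) => //; first by rewrite eq_sym.
move: u w1 w2 {u_in w1_in w2_in w1u w2u w12 ex1 ex2 d1 d2 x12 u1w1} dom1 dom2 branch.
move=> [t i] [s1 j1] [s2 j2] /=.
by rewrite /tree_dominant /between /prod_dist /= (tree_symT D_tree s1 t) /distn; lia.
Qed.

Definition leaf_behind u l := (l \in leaves e) &&
  [forall w in S, (w != u) && tree_dominant u w ==> (D l w.1 == D l u.1 + D u.1 w.1)].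

Lemma exists_leaf_behind u : u \in S -> exists l, leaf_behind u l.
Proof.
move=> u_in; have [u_leaf | u_nleaf] := boolP (u.1 \in leaves e).
  exists u.1; rewrite /leaf_behind u_leaf; apply/forall_inP => w _.
  by rewrite (tree_reflT D_tree) add0n eqxx implybT.
have [/exists_inP [w0 w0_in /andP[w0u dom0]] | /exists_inPn no_dom] :=
  boolP [exists w in S, (w != u) && tree_dominant u w]; last first.
  have [l l_leaf] := leaf_exists e_sym D_tree V_gt1.
  exists l; rewrite /leaf_behind l_leaf; apply/forall_inP => w w_in.
  by rewrite (negbTE (no_dom w w_in)).
have [x0 ex0 dx0] := tree_descentT D_tree (tree_dominant_neq w0u dom0).
have [x1 ex1 x10] := nonleaf_other_neighbor u_nleaf ex0.
have [l l_leaf dl] := leaf_behind_edge e_sym D_tree ex1.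
exists l; rewrite /leaf_behind l_leaf; apply/forall_inP => w w_in.
apply/implyP => /andP[wu dom].
have [xw exw dxw] := tree_descentT D_tree (tree_dominant_neq wu dom).
have xw_x0 := tree_dominant_first_step u_in w_in w0_in wu w0u dom dom0 exw dxw ex0 dx0.
by subst xw; apply/eqP; apply: (tree_branch e_sym D_tree ex1 exw x10 dl dxw).
Qed.

Lemma leaf_behind_separates u w l : u \in S -> w \in S -> u != w -> tree_dominant u w ->
  leaf_behind u l -> ~~ leaf_behind w l.
Proof.
case: u w => [t i] [s j] u_in w_in uw dom; have wu : (s, j) != (t, i) by rewrite eq_sym.
case/andP=> _ /forall_inP/(_ _ w_in); rewrite wu dom /= => /eqP dl.
apply/negP => /andP[_ /forall_inP/(_ _ u_in)]; rewrite uw tree_dominant_sym dom /= => /eqP.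
have /= := tree_gt0 D_tree (tree_dominant_neq wu dom).
by rewrite dl (tree_symT D_tree s t); lia.
Qed.

Definition above u := [exists w in S, (w != u) && ~~ tree_dominant u w && (u.2 < w.2)].

Lemma above_separates u w : u \in S -> w \in S -> u != w -> ~~ tree_dominant u w ->
  u.2 < w.2 -> above u && ~~ above w.
Proof.
move=> u_in w_in uw dom uw2; apply/andP; split.
  by apply/exists_inP; exists w; rewrite // eq_sym uw dom.
apply/exists_inP => -[w' w'_in /andP[/andP[w'w dom'] ww']].
apply: (path_dominant_opposite w_in u_in w'_in) => //; first by rewrite tree_dominant_sym.
exact/andP.
Qed.

Lemma gp_card_le : #|S| <= 2 * #|leaves e|.
Proof.
pose lf u := odflt u.1 [pick l | leaf_behind u l].
have lf_behind u : u \in S -> leaf_behind u (lf u).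
  move=> u_in; rewrite /lf; case: pickP => [// | none].
  by have [l] := exists_leaf_behind u_in; rewrite none.
have f_inj : {in S &, injective (fun u => (above u, lf u))}.
  move=> u w u_in w_in [above_uw lf_uw]; apply/eqP/negPn/negP => uw.
  have [dom | ndom] := boolP (tree_dominant u w).
    have := leaf_behind_separates u_in w_in uw dom (lf_behind u u_in).
    by rewrite lf_uw lf_behind.
  have [lt | lt | eq2] := ltngtP u.2 w.2; last by rewrite /tree_dominant eq2 distnn in ndom.
    by have := above_separates u_in w_in uw ndom lt; rewrite above_uw andbN.
  rewrite tree_dominant_sym in ndom; rewrite eq_sym in uw.
  by have := above_separates w_in u_in uw ndom lt; rewrite above_uw andbN.
rewrite -(card_in_imset f_inj) -(card_bool) -cardsT -cardsX.
apply/subset_leq_card/subsetP => _ /imsetP [u u_in ->].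
by rewrite in_setX in_setT; case/andP: (lf_behind u u_in).
Qed.

End GeneralPositionBound.

Lemma path_escape (i j : 'I_n) : (i == j) || ~~ path_end i ->
  exists2 i' : 'I_n, path_rel i i' & distn i' j = (distn i j).+1.
Proof.
move=> ij; have {}ij : ((i : nat) == j) || ~~ path_end i := ij.
rewrite /path_end in ij; have i_lt := ltn_ord i; have j_lt := ltn_ord j.
have [/andP[ji i1_lt] | down] := boolP ((j <= i) && (i.+1 < n)).
  by exists (Ordinal i1_lt); rewrite ?path_relE /distn /=; lia.
have i'_lt : i.-1 < n by lia.
by exists (Ordinal i'_lt); rewrite ?path_relE /distn /=; lia.
Qed.

Lemma max_distant_le u v w : max_distant E u v -> E u w -> prod_dist w v <= prod_dist u v.
Proof. by move=> /forallP/(_ w)/implyP uv /uv; rewrite !dist_prod (prod_dist_sym v). Qed.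

Lemma max_distant_tree_escape t i s j t' : max_distant E (t, i) (s, j) ->
  e t t' -> D t' s = (D t s).+1 -> D t s < distn i j.
Proof.
move=> uv ett' dt'; have tt' : (t, i) != (t', i).
  by apply: contra_eq_neq dt' => -[<-]; lia.
have edge : E (t, i) (t', i) by apply: strong_prod_edge; rewrite ?ett' ?orbT ?eqxx.
by have := max_distant_le uv edge; rewrite /prod_dist /= dt'; lia.
Qed.

Lemma max_distant_path_escape t i s j (i' : 'I_n) : max_distant E (t, i) (s, j) ->
  path_rel i i' -> distn i' j = (distn i j).+1 -> distn i j < D t s.
Proof.
move=> uv ii' di'; have ti : (t, i) != (t, i').
  by apply: contra_eq_neq di' => -[<-]; lia.
have edge : E (t, i) (t, i') by apply: strong_prod_edge; rewrite ?ii' ?orbT ?eqxx.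
by have := max_distant_le uv edge; rewrite /prod_dist /= di'; lia.
Qed.

Section StrongResolvingCliqueBound.
Variable K : {set V * 'I_n}.
Hypothesis K_clique : clique (SR_rel E) K.

Lemma clique_max_distant u w : u \in K -> w \in K -> u != w -> max_distant E u w.
Proof.
move=> u_in w_in uw; move/forall_inP/(_ u u_in)/forall_inP/(_ w w_in): K_clique.
by rewrite /SR_rel uw /= => /andP[].
Qed.

Lemma clique_tree_escape t i s j : (t, i) \in K -> (s, j) \in K -> (t, i) != (s, j) ->
  t \notin leaves e \/ t = s -> D t s < distn i j.
Proof.
move=> u_in w_in uw /(exists_step_away D_tree V_gt1) [t' ett' dt'].
exact: max_distant_tree_escape (clique_max_distant u_in w_in uw) ett' dt'.
Qed.

Lemma clique_path_escape t i s j : (t, i) \in K -> (s, j) \in K -> (t, i) != (s, j) ->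
  (i == j) || ~~ path_end i -> distn i j < D t s.
Proof.
move=> u_in w_in uw /path_escape [i' ii' di'].
exact: max_distant_path_escape (clique_max_distant u_in w_in uw) ii' di'.
Qed.

Lemma clique_nonleaf_end t i s j : (t, i) \in K -> (s, j) \in K -> (t, i) != (s, j) ->
  t \notin leaves e -> path_end i.
Proof.
move=> u_in w_in uw t_nleaf; apply: contraT => i_int.
have i_escape : (i == j) || ~~ path_end i by rewrite i_int orbT.
have := clique_tree_escape u_in w_in uw (or_introl t_nleaf).
by have := clique_path_escape u_in w_in uw i_escape; lia.
Qed.

Lemma clique_same_tree_end t i j : (t, i) \in K -> (t, j) \in K -> i != j -> path_end i.
Proof.
move=> u_in w_in ij; have uw : (t, i) != (t, j) by apply: contra_neq ij => -[].
apply: contraT => i_int; have i_escape : (i == j) || ~~ path_end i by rewrite i_int orbT.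
have := clique_tree_escape u_in w_in uw (or_intror erefl).
by have := clique_path_escape u_in w_in uw i_escape; rewrite (tree_reflT D_tree); lia.
Qed.

Definition corner_proj l0 i0 (u : V * 'I_n) :=
  (if u.1 \in leaves e then u.1 else l0, if path_end u.2 then u.2 else i0).

Lemma clique_proj_leaf l0 i0 t i s j : (t, i) \in K -> (s, j) \in K -> (t, i) != (s, j) ->
  (corner_proj l0 i0 (t, i)).2 = (corner_proj l0 i0 (s, j)).2 -> t \in leaves e.
Proof.
move=> u_in w_in uw; apply: contraPT => t_nleaf.
have i_end := clique_nonleaf_end u_in w_in uw t_nleaf.
have Dts := clique_tree_escape u_in w_in uw (or_introl t_nleaf).
rewrite /= i_end; have [j_end ij | j_int _] := boolP (path_end j).
  by move: Dts; rewrite ij distnn.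
have wu : (s, j) != (t, i) by rewrite eq_sym.
have j_escape : (j == i) || ~~ path_end j by rewrite j_int orbT.
have := clique_path_escape w_in u_in wu j_escape.
by rewrite (tree_symT D_tree s) distnC; lia.
Qed.

Lemma clique_card_le : #|K| <= 2 * #|leaves e|.
Proof.
have [l0 l0_leaf] := leaf_exists e_sym D_tree V_gt1.
have n_gt0 : 0 < n by lia.
pose i0 := Ordinal n_gt0; pose proj := corner_proj l0 i0.
have proj_inj : {in K &, injective proj}.
  move=> [t i] [s j] u_in w_in proj_uw; apply/eqP/negPn/negP => uw.
  have wu : (s, j) != (t, i) by rewrite eq_sym.
  have t_leaf := clique_proj_leaf u_in w_in uw (congr1 snd proj_uw).
  have s_leaf := clique_proj_leaf w_in u_in wu (congr1 snd (esym proj_uw)).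
  move: proj_uw; rewrite /proj /corner_proj /= t_leaf s_leaf => -[ts ij]; subst s.
  have ij' : i != j by apply: contra_neq uw => ->.
  have ji' : j != i by rewrite eq_sym.
  rewrite (clique_same_tree_end u_in w_in ij') (clique_same_tree_end w_in u_in ji') in ij.
  by rewrite ij eqxx in ij'.
rewrite -card_corners -(card_in_imset proj_inj); apply/subset_leq_card/subsetP.
move=> _ /imsetP [[t i] _ ->]; rewrite in_corners /proj /corner_proj /=.
by apply/andP; split; case: ifP.
Qed.

End StrongResolvingCliqueBound.

End StrongProduct.

Theorem proposition4p4 (V : finType) (e : rel V) (r n : nat) :
  simple_graph e -> in_family_T e ->
  #|leaves e| = 2 * r -> 2 <= n ->
  gp (strong_prod e (@path_rel n)) = 4 * r /\
  omega (SR_rel (strong_prod e (@path_rel n))) = 4 * r.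
Proof.
move=> [e_sym _] [k [_ stage_k]] leaves_r n_gt1.
have [D D_tree] := stage_tree_metric stage_k.
have V_gt1 : 1 < #|V| by rewrite -cardsT ltnW ?(stage_card stage_k).
have -> : 4 * r = 2 * #|leaves e| by rewrite leaves_r mulnA.
split; apply/eqP; rewrite eqn_leq; apply/andP; split.
- apply/bigmax_leqP => S /asboolP S_gp.
  exact: (gp_card_le D_tree n_gt1 e_sym V_gt1 S_gp).
- rewrite -(card_corners e n_gt1).
  exact/leq_bigmax_cond/asboolP/(corners_gp D_tree n_gt1).
- apply/bigmax_leqP => K K_clique.
  exact: (clique_card_le D_tree n_gt1 e_sym V_gt1 K_clique).
- rewrite -(card_corners e n_gt1).
  exact/leq_bigmax_cond/(corners_clique D_tree n_gt1).
Qed.
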